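(* Let $M$ be either the interval $[0,1]$ or the unit circle $S^1$, and let $f:M\to M$ be continuous. Then every wandering interval $J$ of $f$ satisfies $\mu(J)=0$ for every Borel probability measure $\mu$ that is an expansive measure of $f$.
   Context: $M$ carries its usual metric $d$. A wandering interval of $f$ is an interval $J\subset M$ such that $f^n(J)\cap f^m(J)=\emptyset$ for all distinct $n,m\in\{0,1,2,\dots\}$ and no point of $J$ belongs to the stable set $W^s(p)=\{x:\lim_{n\to\infty}d(f^n(x),f^n(p))=0\}$ of a periodic point $p$. A Borel probability measure $\mu$ is an expansive measure of $f$ if there is $\delta>0$ with $\mu(\Phi_\delta(x))=0$ for all $x\in M$, where $\Phi_\delta(x)=\{y\in M: d(f^i(y),f^i(x))\le\delta \ \forall i\in\{0,1,2,\dots\}\}$. *)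

From HB Require Import structures.
From mathcomp Require Import all_boot all_order all_algebra.
From mathcomp Require Import all_classical all_reals all_analysis.
Set Implicit Arguments. Unset Strict Implicit. Unset Printing Implicit Defensive.
Import Order.TTheory GRing.Theory Num.Theory.
Import numFieldNormedType.Exports.
Local Open Scope classical_set_scope.
Local Open Scope ring_scope.

(* The two phase spaces: M = [0,1] or M = S^1.  Both are modelled as
   subsets of the real line R:
   - Interval : M = [0,1] with d x y = |x - y|;
   - Circle   : M = [0,1) = R/Z with the usual (arc-length) metric
                d x y = min(|x-y|, 1-|x-y|). *)
Inductive phase_space := Interval | Circle.

Section Defs.
Variable R : realType.

Definition Mset (s : phase_space) : set R :=
  match s with Interval => `[0, 1] | Circle => `[0, 1[ end.

Definition dist (s : phase_space) (x y : R) : R :=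
  match s with
  | Interval => `|x - y|
  | Circle => Num.min `|x - y| (1 - `|x - y|)
  end.

Definition frac (x : R) : R := x - (Num.floor x)%:~R.

(* J is an interval of M (for the circle: an arc, i.e. the image of an
   interval of R under the covering map R -> R/Z). *)
Definition is_M_interval (s : phase_space) (J : set R) : Prop :=
  match s with
  | Interval => J `<=` `[0, 1] /\ is_interval J
  | Circle => exists I : set R, is_interval I /\ J = frac @` I
  end.

Definition cont_self_map (s : phase_space) (f : R -> R) : Prop :=
  (forall x, Mset s x -> Mset s (f x)) /\
  (forall x, Mset s x -> forall e : R, 0 < e -> exists2 del : R, 0 < del &
     forall y, Mset s y -> dist s x y < del -> dist s (f x) (f y) < e).

Definition periodic_point (s : phase_space) (f : R -> R) (p : R) : Prop :=
  Mset s p /\ exists n : nat, (0 < n)%N /\ iter n f p = p.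

Definition stable_set (s : phase_space) (f : R -> R) (p : R) : set R :=
  [set x | Mset s x /\
     (fun n : nat => dist s (iter n f x) (iter n f p)) @ \oo --> (0 : R)].

Definition wandering_interval (s : phase_space) (f : R -> R) (J : set R) : Prop :=
  is_M_interval s J /\
  (forall n m : nat, n <> m -> (iter n f @` J) `&` (iter m f @` J) = set0) /\
  (forall x, J x -> forall p, periodic_point s f p -> ~ stable_set s f p x).

Definition Phi (s : phase_space) (f : R -> R) (del x : R) : set R :=
  [set y | Mset s y /\ forall i : nat, dist s (iter i f y) (iter i f x) <= del].

(* A Borel probability measure on M is represented as a probability
   measure on the Borel sets of R giving full mass to M. *)
Definition prob_on (s : phase_space) (mu : probability R R) : Prop :=
  mu (Mset s) = 1%E.

Definition expansive_measure (s : phase_space) (f : R -> R)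
    (mu : probability R R) : Prop :=
  exists2 del : R, 0 < del & forall x, Mset s x -> mu (Phi s f del x) = 0%E.

End Defs.

From Pilot Require Import Defs.
From mathcomp Require Import all_boot all_order all_algebra.
From mathcomp Require Import all_classical all_reals all_analysis.
From mathcomp Require Import lra zify measurable_realfun.
Local Open Scope classical_set_scope.
Local Open Scope ring_scope.

Set Implicit Arguments. Unset Strict Implicit. Unset Printing Implicit Defensive.
Import Order.TTheory GRing.Theory Num.Theory.
Import numFieldNormedType.Exports.

(* The images f^n(J) of a wandering interval are pairwise disjoint intervals
   (arcs) of M, so each point of the grid {i/K | i <= K} lies in at most one
   of them; since an image of diameter more than 1/K contains a grid point,
   diam f^n(J) <= delta for all n >= N.  The finitely many iterates f^i,
   i < N, are equicontinuous, so every x in J has a neighbourhood whose trace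
   on J lies in Phi_delta(x), a null set.  Covering J by countably many such
   neighbourhoods shows mu(J) = 0. *)

Ltac case_norm u := let h := fresh in have [h|h] := leP 0 u;
  [rewrite ?(ger0_norm h) | rewrite ?(ltr0_norm h)].

Section distance.
Variable R : realType.
Implicit Types (s : phase_space) (x y z : R).

Lemma dist_le_norm s x y : dist s x y <= `|x - y|.
Proof. by case: s; rewrite /= ?ge_min lexx. Qed.

Lemma distC s x y : dist s x y = dist s y x.
Proof. by case: s; rewrite /= distrC. Qed.

Lemma dist_triangle s x y z : Mset s x -> Mset s y -> Mset s z ->
  dist s x z <= dist s x y + dist s y z.
Proof.
case: s => /=.
  by move=> *; rewrite -[x - z](subrKA y); exact: ler_normD.
rewrite !in_itv /= => /andP[x0 x1] /andP[y0 y1] /andP[z0 z1].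
case_norm (x - y); case_norm (y - z); case_norm (x - z); rewrite /Order.min;
by case: ifPn => h1; case: ifPn => h2; case: ifPn => h3;
  rewrite -?leNgt in h1 h2 h3; lra.
Qed.

Lemma circle_dist_lt_norm (c c' eps : R) : 0 <= c' < 1 ->
  eps <= c -> eps <= 1 - c -> dist Circle c c' < eps -> `|c - c'| < eps.
Proof.
move=> /andP[c'0 c'1] epsc epsc1; rewrite /= /Order.min.
by case: (ltP `|c - c'| (1 - `|c - c'|)); case_norm (c - c'); move=> *; lra.
Qed.

Lemma frac_itv x : 0 <= Defs.frac x < 1.
Proof.
rewrite /Defs.frac; have /andP[h1 h2] := Num.Theory.floor_itv x.
rewrite intrD in h2.
by apply/andP; split; lra.
Qed.

Lemma Mset_frac x : Mset Circle (Defs.frac x).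
Proof. by rewrite /= in_itv /= frac_itv. Qed.

Lemma frac_addz x (m : int) : 0 <= x < 1 -> Defs.frac (x + m%:~R) = x.
Proof.
move=> /andP[x0 x1]; rewrite /Defs.frac (@Num.Theory.floor_def _ _ m); first lra.
by rewrite intrD; apply/andP; split; lra.
Qed.

Lemma dist_frac_le x y : dist Circle (Defs.frac x) (Defs.frac y) <= `|x - y|.
Proof.
have /andP[a0 a1] := frac_itv x; have /andP[b0 b1] := frac_itv y.
have : Defs.frac x - Defs.frac y = x - y - (Num.floor x - Num.floor y)%:~R.
  by rewrite /Defs.frac intrB; lra.
move: (Defs.frac x) (Defs.frac y) (Num.floor x - Num.floor y) a0 a1 b0 b1.
move=> a b m a0 a1 b0 b1 E /=.
have [m_le|[m_ge|m_small]] : m <= -2 \/ 2 <= m \/ m = -1 \/ m = 0 \/ m = 1 by lia.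
- have : m%:~R <= (-2)%:~R :> R by rewrite ler_int.
  by case_norm (x - y); case_norm (a - b); rewrite /Order.min; case: ifPn;
    rewrite -?leNgt; lra.
- have : 2%:~R <= m%:~R :> R by rewrite ler_int.
  by case_norm (x - y); case_norm (a - b); rewrite /Order.min; case: ifPn;
    rewrite -?leNgt; lra.
by case: m_small E => [->|[->|->]]; case_norm (x - y); case_norm (a - b);
  rewrite /Order.min; case: ifPn; rewrite -?leNgt; lra.
Qed.

End distance.

Lemma measurable_Mset (R : realType) s : measurable (Mset s : set R).
Proof. by case: s; exact: measurable_itv. Qed.

Section iterates.
Variables (R : realType) (s : phase_space) (f : R -> R).
Hypothesis hf : cont_self_map s f.

Lemma Mset_iter n x : Mset s x -> Mset s (iter n f x).
Proof. by move=> Mx; elim: n => //= n IH; exact: hf.1. Qed.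

Lemma iter_continuous n x : Mset s x -> forall e, 0 < e -> exists2 d, 0 < d &
  forall y, Mset s y -> dist s x y < d -> dist s (iter n f x) (iter n f y) < e.
Proof.
move=> Mx; elim: n => [|n IH] e e0 /=; first by exists e.
have [d1 d10 H1] := hf.2 _ (Mset_iter n Mx) e e0.
have [d d0 H] := IH d1 d10.
by exists d => // y My xy; apply: H1; [exact: Mset_iter | exact: H].
Qed.

Lemma iter_equicontinuous N x : Mset s x -> forall e, 0 < e -> exists2 d, 0 < d &
  forall i, (i < N)%N -> forall y, Mset s y -> dist s x y < d ->
    dist s (iter i f x) (iter i f y) < e.
Proof.
move=> Mx e e0; elim: N => [|N [d1 d10 H1]]; first by exists 1.
have [d2 d20 H2] := iter_continuous N Mx e0.
exists (Num.min d1 d2) => [|i]; first by rewrite lt_min d10 d20.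
rewrite ltnS leq_eqVlt => /predU1P[-> y My|iN y My];
  rewrite lt_min => /andP[y1 y2].
- exact: H2.
- exact: H1.
Qed.

(* [Phi s f del x] is the trace on [M] of the intersection of the closures of
   the sets of points whose [i]-th iterate stays [del]-close to that of [x];
   continuity of [iter i f] makes the closures add no point of [M]. *)
Lemma measurable_Phi del x : Mset s x -> measurable (Phi s f del x).
Proof.
move=> Mx.
pose A i := [set y | Mset s y /\ dist s (iter i f y) (iter i f x) <= del].
have -> : Phi s f del x = Mset s `&` \bigcap_i closure (A i).
  apply/seteqP; split=> [y [My Hy]|y [My Hy]].
    by split=> // i _; apply: subset_closure.
  split=> // i; apply/ler_addgt0Pr => e e0.
  have [d d0 Hd] := iter_continuous i My e0.
  have [z [[Mz Hz] yz]] := Hy i I _ (@nbhsx_ballx _ _ y d d0).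
  have := Hd z Mz (le_lt_trans (dist_le_norm s y z) yz).
  have := dist_triangle (Mset_iter i My) (Mset_iter i Mz) (Mset_iter i Mx).
  lra.
apply: measurableI; first exact: measurable_Mset.
apply: bigcapT_measurable => i.
by apply: closed_measurable; exact: closed_closure.
Qed.

End iterates.

Section locally_null.
Variables (R : realType) (mu : {measure set R -> \bar R}).

(* Countably many balls with rational centres and radii [1/(n+1)] suffice to
   cover [A] by null pieces: a ball of radius less than [d/2] centred at a
   rational point near [x] lies inside [ball x d]. *)
Lemma measure0_locally (A : set R) : measurable A ->
  (forall x, A x -> exists2 d, 0 < d & mu (A `&` ball x d) = 0%E) ->
  mu A = 0%E.
Proof.
move=> mA Anull.
pose B q n := A `&` ball (ratr q : R) n.+1%:R^-1.
pose F k := if unpickle k is Some (q, n) then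
  if pselect (mu (B q n) = 0%E) then B q n else set0 else set0.
have mB q n : measurable (B q n) by exact: measurableI mA (measurable_ball _ _).
have mF k : measurable (F k).
  rewrite /F; case: (unpickle k) => [[q n]|] //.
  by destruct pselect; [exact: mB|exact: measurable0].
have F0 k : mu (F k) = 0%E.
  by rewrite /F; case: (unpickle k) => [[q n]|]; [destruct pselect|];
    rewrite ?measure0.
have AF : A `<=` \bigcup_k F k.
  move=> x Ax; have [d d0 Hd] := Anull x Ax.
  have d20 : 0 <= 2 / d by rewrite divr_ge0 // ltW.
  have /andP[_ nd] := Num.Theory.truncn_itv d20; set n := Num.truncn _ in nd.
  set r := (n.+1%:R : R)^-1.
  have r0 : 0 < r by rewrite invr_gt0 ltr0n.
  have r2d : r + r < d.
    rewrite -mulr2n -mulr_natr -ltr_pdivlMr // -[d / 2]invf_div.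
    by rewrite ltf_pV2 ?posrE ?ltr0n ?divr_gt0.
  have [q qx] : exists q, ratr q \in `]x - r, x + r[.
    by apply: rat_in_itvoo; rewrite ltrD2l gtrN.
  exists (pickle (q, n)); first exact: I.
  have xq : ball (ratr q : R) r x by apply: ball_sym; rewrite ball_itv.
  rewrite /F pickleK; destruct pselect as [Bnull|Bnon0]; first by split.
  apply: Bnon0; apply: (subset_measure0 _ _ _ Hd) => //.
    exact: measurableI mA (measurable_ball _ _).
  move=> y [Ay qy]; split=> //; apply: le_ball (ltW r2d) _ _.
  exact: ball_triangle (ball_sym xq) qy.
apply/eqP; rewrite -measure_le0.
apply: le_trans (measure_sigma_subadditive mu mF mA AF) _.
by rewrite eseries0 // => i _ _; exact: F0.
Qed.

End locally_null.

Lemma is_interval_shift (R : realFieldType) (I : set R) (c : R) : is_interval I ->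
  is_interval [set x | I (x + c)].
Proof.
move=> HI y1 y2 /= h1 h2 z /andP[z1 z2]; apply: (HI _ _ h1 h2).
by apply/andP; split; lra.
Qed.

Lemma M_interval_sub (R : realType) s (J : set R) :
  is_M_interval s J -> J `<=` Mset s.
Proof.
case: s => /=; first by case.
by move=> [I [_ ->]] x [t _ <-]; exact: Mset_frac.
Qed.

(* An arc [frac @` I] is the trace on [0,1[ of the integer translates of [I]. *)
Lemma measurable_M_interval (R : realType) s (J : set R) :
  is_M_interval s J -> measurable J.
Proof.
case: s => /=; first by move=> [_ HJ]; exact: is_interval_measurable.
move=> [I [HI ->]].
have -> : @Defs.frac R @` I = `[0, 1[ `&` ((\bigcup_n [set x | I (x + n%:R)]) `|`
                                       (\bigcup_n [set x | I (x - n%:R)])).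
  apply/seteqP; split=> [x [t It <-]|x [/=]].
    split; first by rewrite /= in_itv /= frac_itv.
    rewrite /Defs.frac; case: (Num.floor t) => n.
      by left; exists n => //=; rewrite subrK.
    by right; exists n.+1 => //=; rewrite NegzE mulrNz opprK pmulrn addrK.
  rewrite in_itv /= => x01 [[n _ /= In]|[n _ /= In]].
    by exists (x + n%:R) => //; rewrite (frac_addz (Posz n) x01).
  by exists (x - n%:R) => //; have := frac_addz (- (Posz n)) x01; rewrite intrN.
apply: measurableI; first exact: measurable_itv.
by apply: measurableU; apply: bigcupT_measurable => n;
  apply: is_interval_measurable; exact: is_interval_shift.
Qed.

Lemma functional_rel_bounded (K : nat) (P : nat -> nat -> Prop) :
  (forall i n m, (i < K)%N -> P i n -> P i m -> n = m) ->
  exists N, forall i n, (i < K)%N -> P i n -> (n < N)%N.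
Proof.
elim: K => [|K IH] Pfun; first by exists 0%N.
have [N0 HN0] : exists N, forall i n, (i < K)%N -> P i n -> (n < N)%N.
  by apply: IH => i n m iK; apply: Pfun; lia.
have [[n0 Pn0]|noP] := pselect (exists n, P K n).
  exists (maxn N0 n0.+1) => i n.
  rewrite ltnS leq_eqVlt => /predU1P[-> PKn|iK Pin].
    by have := Pfun K n n0 (ltnSn K) PKn Pn0; lia.
  by have := HN0 _ _ iK Pin; lia.
exists N0 => i n; rewrite ltnS leq_eqVlt => /predU1P[-> PKn|]; last exact: HN0.
by case: noP; exists n.
Qed.

Section grid.
Variable R : realType.

Definition meets_grid (K : nat) (A : set R) : Prop :=
  exists2 i, (i <= K)%N & A (i%:R / K%:R).

(* Each of the [K + 1] grid points lies in at most one of the [A n]. *)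
Lemma disjoint_eventually_miss_grid (K : nat) (A : nat -> set R) :
  (forall n m, n <> m -> A n `&` A m = set0) ->
  exists N, forall n, (N <= n)%N -> ~ meets_grid K (A n).
Proof.
move=> Adisj.
have [N HN] : exists N,
    forall i n, (i < K.+1)%N -> A n (i%:R / K%:R) -> (n < N)%N.
  apply: functional_rel_bounded => i n m _ An Am.
  have [//|nm] := eqVneq n m.
  by have : (A n `&` A m) (i%:R / K%:R) by []; rewrite Adisj //; exact/eqP.
by exists N => n Nn [i iK Ani]; have := HN i n iK Ani; lia.
Qed.

Lemma within_continuous_eps_delta (A : set R) (g : R -> R) :
  (forall x, A x -> forall e, 0 < e -> exists2 d, 0 < d &
     forall y, A y -> `|x - y| < d -> `|g x - g y| < e) ->
  {within A, continuous g}.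
Proof.
move=> gcont; apply/subspace_continuousP => x Ax.
apply/cvgrPdist_lt => e e0; have [d d0 Hd] := gcont x Ax e e0.
by exists d => //= y /= xy Ay; exact: Hd.
Qed.

(* The values between [g a] and [g b] form an interval of length more than
   [1/K] inside [0,1], so they contain a grid point, reached by IVT. *)
Lemma image_meets_grid (K : nat) (g : R -> R) (a b : R) : (0 < K)%N -> a <= b ->
  {within `[a, b], continuous g} -> 0 <= g a <= 1 -> 0 <= g b <= 1 ->
  K%:R^-1 < `|g a - g b| -> meets_grid K (g @` `[a, b]).
Proof.
move=> K0 ab gcont /andP[ga0 ga1] /andP[gb0 gb1] gab.
set lo := Num.min (g a) (g b); set hi := Num.max (g a) (g b).
have Kp : 0 < (K%:R : R) by rewrite ltr0n.
set w := (K%:R : R)^-1 in gab *.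
have Kw : K%:R * w = 1 by rewrite /w mulfV // gt_eqF.
have w0 : 0 < w by rewrite /w invr_gt0.
have [lo0 hi1 wide] : [/\ 0 <= lo, hi <= 1 & w < hi - lo].
  rewrite /lo /hi /Order.min /Order.max; move: gab; case: (ltP (g a) (g b)) => h;
  by case_norm (g a - g b); move=> gab; split; lra.
have Klo : 0 <= K%:R * lo by rewrite mulr_ge0 // ltW.
have /andP[k1 k2] := Num.Theory.truncn_itv Klo.
set k := Num.truncn (K%:R * lo) in k1 k2.
have kK : (k < K)%N by rewrite -(ltr_nat R); nra.
exists k.+1; first by [].
have [c cab gc] : exists2 c, c \in `[a, b] & g c = k.+1%:R / K%:R.
  by apply: IVT => //; rewrite -/lo -/hi -/w; apply/andP; split; nra.
by exists c.
Qed.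

End grid.

Section wandering.
Variable R : realType.

Lemma interval_image_meets_grid (f : R -> R) n (J : set R) K u v :
  cont_self_map Defs.Interval f -> J `<=` `[0, 1] -> is_interval J ->
  (0 < K)%N -> J u -> J v -> K%:R^-1 < `|iter n f u - iter n f v| ->
  meets_grid K (iter n f @` J).
Proof.
move=> hf J01 HJ K0; wlog uv : u v / u <= v => [wlog_uv|Ju Jv big].
  move=> Ju Jv big; have [uv|/ltW vu] := leP u v; first exact: (wlog_uv u v).
  by apply: (wlog_uv v u vu) => //; rewrite distrC.
have Juv x : x \in `[u, v] -> J x by rewrite in_itv /= => xuv; exact: (HJ u v).
have M01 (y : R) : Mset Defs.Interval y -> 0 <= y <= 1 by rewrite /= in_itv.
have [i iK [c cuv fc]] : meets_grid K (iter n f @` `[u, v]).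
  apply: image_meets_grid => //; try exact/M01/(Mset_iter hf)/J01.
  apply: within_continuous_eps_delta => x xuv e e0.
  have [d d0 Hd] := iter_continuous hf n (J01 _ (Juv _ xuv)) e0.
  by exists d => // y yuv; apply: Hd; exact: J01 (Juv _ yuv).
by exists i => //; exists c => //; exact: Juv.
Qed.

(* Away from the cut point [0] of the circle, arc distance and distance on
   the line agree locally. *)
Lemma iter_frac_continuous (f : R -> R) n x : cont_self_map Circle f ->
  iter n f (Defs.frac x) <> 0 -> forall e, 0 < e -> exists2 d, 0 < d &
  forall y, `|x - y| < d ->
    `|iter n f (Defs.frac x) - iter n f (Defs.frac y)| < e.
Proof.
move=> hf fx0 e e0; set c := iter n f (Defs.frac x).
have M01 (y : R) : Mset Circle y -> 0 <= y < 1 by rewrite /= in_itv.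
have /andP[c0 c1] := M01 _ (Mset_iter hf n (Mset_frac x)).
have cp : 0 < c by rewrite lt0r c0 andbT; exact/eqP.
pose eps := Num.min e (Num.min c (1 - c)).
have eps0 : 0 < eps by rewrite !lt_min e0 cp /= subr_gt0.
have [epse epsc epsc1] : [/\ eps <= e, eps <= c & eps <= 1 - c].
  by rewrite /eps !ge_min !lexx /= ?orbT.
have [d d0 Hd] := iter_continuous hf n (Mset_frac x) eps0.
exists d => // y xy; apply: lt_le_trans epse.
apply: circle_dist_lt_norm epsc epsc1 _; first exact/M01/Mset_iter/Mset_frac.
exact: Hd (Mset_frac y) (le_lt_trans (dist_frac_le x y) xy).
Qed.

Lemma arc_image_meets_grid (f : R -> R) n (I : set R) K u v :
  cont_self_map Circle f -> is_interval I -> (0 < K)%N -> I u -> I v ->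
  K%:R^-1 < `|iter n f (Defs.frac u) - iter n f (Defs.frac v)| ->
  meets_grid K (iter n f @` (@Defs.frac R @` I)).
Proof.
move=> hf HI K0.
have [[t It ft0]|off0] := pselect (exists2 t, I t & iter n f (Defs.frac t) = 0).
  move=> *; exists 0%N => //.
  by rewrite mul0r; exists (Defs.frac t) => //; exists t.
wlog uv : u v / u <= v => [wlog_uv|Iu Iv big].
  move=> Iu Iv big; have [uv|/ltW vu] := leP u v; first exact: (wlog_uv u v).
  by apply: (wlog_uv v u vu) => //; rewrite distrC.
have Iuv x : x \in `[u, v] -> I x by rewrite in_itv /= => xuv; exact: (HI u v).
have M01 (y : R) : Mset Circle y -> 0 <= y <= 1.
  by rewrite /= in_itv /= => /andP[-> /ltW ->].
have [i iK [c cuv fc]] : meets_grid K ((iter n f \o @Defs.frac R) @` `[u, v]).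
  apply: image_meets_grid => //; try exact/M01/(Mset_iter hf)/Mset_frac.
  apply: within_continuous_eps_delta => x xuv e e0.
  have fx0 : iter n f (Defs.frac x) <> 0.
    by move=> fx0; apply: off0; exists x => //; exact: Iuv.
  have [d d0 Hd] := iter_frac_continuous hf fx0 e0.
  by exists d => // y _; exact: Hd.
by exists i => //; exists (Defs.frac c) => //; exists c => //; exact: Iuv.
Qed.

Lemma wandering_iterates_shrink s (f : R -> R) (J : set R) :
  cont_self_map s f -> wandering_interval s f J ->
  forall del : R, 0 < del -> exists N, forall n, (N <= n)%N ->
    forall u v, J u -> J v -> dist s (iter n f u) (iter n f v) <= del.
Proof.
move=> hf [HJ [Jdisj _]] del del0.
pose K := (Num.truncn del^-1).+1.
have Kdel : K%:R^-1 < del.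
  have del_inv0 : 0 <= del^-1 by rewrite invr_ge0 ltW.
  have /andP[_ h] := Num.Theory.truncn_itv del_inv0.
  by rewrite -[del]invrK ltf_pV2 ?posrE ?ltr0n ?invr_gt0.
have [N HN] := disjoint_eventually_miss_grid K Jdisj.
exists N => n Nn u v Ju Jv; rewrite leNgt; apply/negP => far; apply: (HN n Nn).
have {}far : K%:R^-1 < `|iter n f u - iter n f v|.
  exact: lt_trans Kdel (lt_le_trans far (dist_le_norm _ _ _)).
case: s hf HJ far => [hf [J01 HJ]|hf [I [HI EJ]]] far.
  exact: interval_image_meets_grid hf J01 HJ _ Ju Jv far.
rewrite EJ in Ju Jv *; case: Ju Jv far => u' Iu' <- [v' Iv' <-] far.
exact: arc_image_meets_grid hf HI _ Iu' Iv' far.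
Qed.

End wandering.

Theorem lemma4p11 (R : realType) (s : phase_space) (f : R -> R) :
  cont_self_map s f ->
  forall J : set R, wandering_interval s f J ->
  forall mu : probability R R, prob_on s mu -> expansive_measure s f mu ->
  mu J = 0%E.
Proof.
move=> hf J HW mu _ [del del0 Phi0].
have JM := M_interval_sub HW.1.
have mJ := measurable_M_interval HW.1.
have [N HN] := wandering_iterates_shrink hf HW del0.
apply: (measure0_locally mJ) => x Jx.
have [d d0 Hd] := iter_equicontinuous hf N (JM x Jx) del0.
exists d => //; apply: (subset_measure0 _ _ _ (Phi0 x (JM x Jx))).
- exact: measurableI mJ (measurable_ball _ _).
- exact: measurable_Phi hf del x (JM x Jx).
move=> y [Jy xy]; split=> [|i]; first exact: JM.
have [iN|Ni] := ltnP i N; last exact: HN.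
rewrite distC; apply/ltW/(Hd i iN y (JM y Jy)).
by apply: le_lt_trans (dist_le_norm s x y) _; move: xy; rewrite -ball_normE.
Qed.
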